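(* Let $N\ge1$, $\Lambda=\{0,1,\dots,N\}$, and let $T$ be the $(N+1)\times(N+1)$ Toeplitz matrix whose $(i,j)$ entry is $a_{i-j}$ ($i,j\in\Lambda$, with $a_{-N},\dots,a_N\in\mathbb{C}$), acting on $\mathbb{C}^{N+1}$ with standard basis $\{e_n\}_{n\in\Lambda}$. Let $C$ be a conjugation on $\mathbb{C}^{N+1}$ and $\{f_n\}_{n\in\Lambda}$ an orthonormal basis with $Cf_n=f_n$ for all $n$, and put $c_{n,m}=\sum_{k=0}^N\langle f_k,e_n\rangle\langle f_k,e_m\rangle$ for $m,n\in\Lambda$. Then $T$ is $C$-symmetric if and only if \[ \sum_{m=0}^{N}c_{m,p}\,\bar a_{m-k}=\sum_{m=0}^{N}c_{m,k}\,\bar a_{m-p}\qquad\text{for all }k,p\in\Lambda. \]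
   Context: A conjugation is an anti-linear, involutive ($C^2=I$), isometric map; $T$ is $C$-symmetric if $CT^*C=T$. The inner product on $\mathbb{C}^{N+1}$ is linear in the first entry. *)

From HB Require Import structures.
From mathcomp Require Import all_boot all_order all_algebra.
From mathcomp Require Import complex.
From mathcomp Require Import reals.
Set Implicit Arguments. Unset Strict Implicit. Unset Printing Implicit Defensive.
Import Order.TTheory GRing.Theory Num.Theory.
Local Open Scope ring_scope.
Local Open Scope complex_scope.

Section Defs.
Variables (R : realType) (n : nat).
Local Notation CC := (R[i]).
Local Notation vec := 'cV[CC]_n.

Definition inner (x y : vec) : CC := \sum_(i < n) x i 0 * (y i 0)^*.

Definition ebasis (k : 'I_n) : vec := delta_mx k 0.

Definition is_conjugation (C : vec -> vec) : Prop :=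
  [/\ forall (a : CC) (x y : vec), C (a *: x + y) = a^* *: C x + C y,
      forall x, C (C x) = x
    & forall x, inner (C x) (C x) = inner x x].

Definition adjmx (T : 'M[CC]_n) : 'M[CC]_n := map_mx (fun z => z^*) T^T.

Definition C_symmetric (C : vec -> vec) (T : 'M[CC]_n) : Prop :=
  forall x : vec, C (adjmx T *m C x) = T *m x.

(* orthonormal family of n vectors (hence a basis of C^n) *)
Definition orthonormal_basis (f : 'I_n -> vec) : Prop :=
  forall i j, inner (f i) (f j) = (i == j)%:R.

End Defs.
Arguments ebasis {R n}.

Definition toeplitz (R : realType) (N : nat) (a : int -> R[i]) : 'M[R[i]]_(N.+1) :=
  \matrix_(i, j) a (i%:Z - j%:Z).

Definition cnm (R : realType) (N : nat) (f : 'I_N.+1 -> 'cV[R[i]]_(N.+1))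
  (n m : 'I_N.+1) : R[i] :=
  \sum_(k < N.+1) inner (f k) (ebasis n) * inner (f k) (ebasis m).

From HB Require Import structures.
From mathcomp Require Import all_boot all_order all_algebra.
From mathcomp Require Import complex.
From mathcomp Require Import reals.
Import Order.TTheory GRing.Theory Num.Theory.
Local Open Scope ring_scope.

(* Expanding x in the C-real orthonormal basis (f_k) shows that
   C x = U conj(x) with U = F F^T, where the columns of F are the f_k; thus U is
   symmetric, U_{m,n} = c_{m,n}, and U conj(U) = 1 because C is involutive.
   Then C T^* C x = U T^T conj(U) x, so T is C-symmetric iff U T^T conj(U) = T,
   i.e. iff T^* U is a symmetric matrix; the displayed identity says exactly
   (T^* U)_{k,p} = (T^* U)_{p,k}. Neither the Toeplitz shape of T nor N >= 1
   plays any role. *)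

Local Notation conjmx := (map_mx Num.conj).

Lemma conjmxK (R : numClosedFieldType) m n (A : 'M[R]_(m, n)) :
  conjmx (conjmx A) = A.
Proof. by rewrite -map_mx_comp map_mx_id // => z /=; rewrite conjCK. Qed.

Lemma mul_cVP (R : comPzSemiRingType) m n (A B : 'M[R]_(m, n)) :
  (forall x : 'cV_n, A *m x = B *m x) -> A = B.
Proof.
move=> eqAB; apply: trmx_inj; apply/mul_rVP => u.
by rewrite -[u]trmxK -!trmx_mul eqAB.
Qed.

Lemma adjmxE (R : realType) n (T : 'M[R[i]]_n) : adjmx T = conjmx T^T.
Proof. by []. Qed.

Lemma inner_ebasis (R : realType) n (x : 'cV[R[i]]_n) (q : 'I_n) :
  inner x (ebasis q) = x q 0.
Proof.
rewrite /inner (bigD1 q) //= big1 => [|l /negbTE neq_lq].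
  by rewrite !mxE !eqxx conjC1 mulr1 addr0.
by rewrite !mxE neq_lq conjC0 mulr0.
Qed.

Section Conjugation.
Variables (R : realType) (n : nat) (C : 'cV[R[i]]_n -> 'cV[R[i]]_n).
Hypothesis conj_C : is_conjugation C.

Lemma conjugationD x y : C (x + y) = C x + C y.
Proof. by case: conj_C => CZD _ _; rewrite -[x]scale1r CZD conjC1 !scale1r. Qed.

Lemma conjugation0 : C 0 = 0.
Proof. by apply: (addrI (C 0)); rewrite -conjugationD !addr0. Qed.

Lemma conjugationZ a x : C (a *: x) = a^* *: C x.
Proof. by case: conj_C => CZD _ _; rewrite -[a *: x]addr0 CZD conjugation0 addr0. Qed.

Lemma conjugationK x : C (C x) = x.
Proof. by case: conj_C. Qed.

Variable f : 'I_n -> 'cV[R[i]]_n.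
Hypotheses (orthonormal_f : orthonormal_basis f) (C_f : forall k, C (f k) = f k).

Definition basis_mx : 'M[R[i]]_n := \matrix_(i, j) f j i 0.

Definition conjugation_mx : 'M[R[i]]_n := basis_mx *m basis_mx^T.
Local Notation U := conjugation_mx.

Lemma basis_mx_orthonormal : basis_mx^T *m conjmx basis_mx = 1%:M.
Proof.
apply/matrixP=> i j; rewrite !mxE -orthonormal_f /inner.
by apply: eq_bigr => l _; rewrite !mxE.
Qed.

Lemma basis_mx_unitary : basis_mx *m (conjmx basis_mx)^T = 1%:M.
Proof.
have /mulmx1C/(congr1 conjmx) := basis_mx_orthonormal.
by rewrite map_mxM conjmxK map_mx1 map_trmx.
Qed.

Lemma basis_mx_mul (y : 'cV_n) : basis_mx *m y = \sum_k y k 0 *: f k.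
Proof.
apply/colP=> i; rewrite !mxE summxE; apply: eq_bigr => k _.
by rewrite !mxE mulrC.
Qed.

Lemma conjugationE x : C x = U *m conjmx x.
Proof.
set y := (conjmx basis_mx)^T *m x.
have xE : x = basis_mx *m y by rewrite mulmxA basis_mx_unitary mul1mx.
have conj_y : basis_mx^T *m conjmx x = conjmx y.
  by rewrite map_mxM map_trmx conjmxK.
rewrite {1}xE /conjugation_mx -mulmxA conj_y !basis_mx_mul.
rewrite (big_morph C conjugationD conjugation0).
by apply: eq_bigr => k _; rewrite conjugationZ C_f [in RHS]mxE.
Qed.

Lemma conjugation_mx_sym : U^T = U.
Proof. by rewrite /conjugation_mx trmx_mul trmxK. Qed.

Lemma conjugation_mx_unitary : U *m conjmx U = 1%:M.
Proof.
apply: mul_cVP => x; rewrite mul1mx -{2}[x]conjugationK !conjugationE.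
by rewrite [conjmx (_ *m conjmx x)]map_mxM conjmxK mulmxA.
Qed.

Lemma C_symmetric_conjugation_mx (T : 'M[R[i]]_n) :
  C_symmetric C T <-> (adjmx T *m U)^T = adjmx T *m U.
Proof.
have conjUU : conjmx U *m U = 1%:M := mulmx1C conjugation_mx_unitary.
have CTC x : C (adjmx T *m C x) = U *m T^T *m conjmx U *m x.
  rewrite !conjugationE [conjmx (_ *m (_ *m _))]map_mxM [conjmx (U *m _)]map_mxM.
  by rewrite adjmxE !conjmxK !mulmxA.
have -> : (adjmx T *m U)^T = conjmx (conjmx U *m T).
  by rewrite [RHS]map_mxM conjmxK trmx_mul conjugation_mx_sym adjmxE -map_trmx trmxK.
have -> : adjmx T *m U = conjmx (T^T *m conjmx U).
  by rewrite [RHS]map_mxM conjmxK adjmxE.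
split=> [CsymT | /(can_inj (@conjmxK _ n n)) symTU x].
- have {}CsymT : U *m T^T *m conjmx U = T by apply: mul_cVP => x; rewrite -CTC.
  by congr conjmx; rewrite -{1}CsymT mulmxA (mulmxA _ U) conjUU mul1mx.
- by rewrite CTC -(mulmxA U) -symTU mulmxA conjugation_mx_unitary mul1mx.
Qed.

End Conjugation.

Arguments conjugation_mx {R n} f.

Lemma cnm_conjugation_mx (R : realType) N (f : 'I_N.+1 -> 'cV[R[i]]_N.+1)
  (m p : 'I_N.+1) : cnm f m p = conjugation_mx f m p.
Proof.
rewrite /cnm !mxE; apply: eq_bigr => k _.
by rewrite !inner_ebasis !mxE.
Qed.

Theorem theorem9p1 (R : realType) (N : nat) (hN : (1 <= N)%N)
  (a : int -> R[i]) (C : 'cV[R[i]]_(N.+1) -> 'cV[R[i]]_(N.+1))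
  (f : 'I_N.+1 -> 'cV[R[i]]_(N.+1)) :
  is_conjugation C -> orthonormal_basis f -> (forall k, C (f k) = f k) ->
  (C_symmetric C (toeplitz N a) <->
   forall k p : 'I_N.+1,
     \sum_(m < N.+1) cnm f m p * (a (m%:Z - k%:Z))^* =
     \sum_(m < N.+1) cnm f m k * (a (m%:Z - p%:Z))^*).
Proof.
move=> conj_C orthonormal_f C_f.
rewrite C_symmetric_conjugation_mx //.
set S := adjmx _ *m _.
have SE k p : S k p = \sum_(m < N.+1) cnm f m p * (a (m%:Z - k%:Z))^*.
  rewrite !mxE; apply: eq_bigr => m _.
  by rewrite cnm_conjugation_mx // !mxE mulrC.
split=> [symS k p | symS]; first by rewrite -!SE -{1}symS mxE.
by apply/matrixP => k p; rewrite mxE SE [RHS]SE; exact/esym/symS.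
Qed.
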